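(* Let $1\le l\le r$ and consider a canonical noiseless MMV model $B=AX$ in which $A$ satisfies $0\le\delta^L_{2k-r+l}(A)<1$ and the nonzero rows of $X$ are in general position. Let $I\subset\{1,\dots,n\}$ satisfy $|I|\le\min(2(k-r)+l,\,k)$ and $|I\setminus\operatorname{supp}X|\le k-r+l$. If $|I\cap\operatorname{supp}X|=k-r+q$ for some integer $q\ge0$, then $$\operatorname{rank}[A_I~B]=|I|+r-q.$$
   Context: Canonical MMV setting: $m,n,r,k$ are positive integers with $r\le m<n$ and $r\le k$. $A\in\mathbb{R}^{m\times n}$ is the sensing matrix with columns $\mathbf a_1,\dots,\mathbf a_n$; $X\in\mathbb{R}^{n\times r}$ has rows $\mathbf x^1,\dots,\mathbf x^n$, $\operatorname{supp}X=\{i:\mathbf x^i\neq 0\}$ and $|\operatorname{supp}X|=k$; $B=AX\in\mathbb{R}^{m\times r}$ has full column rank $r$. For an index set $I$, $A_I$ is the submatrix of $A$ formed by the columns indexed by $I$, and $[A_I~B]$ denotes horizontal concatenation. The lower restricted isometry constant $\delta^L_s(A)$ is the smallest $\delta\ge0$ such that $(1-\delta)\|\mathbf x\|_2^2\le\|A\mathbf x\|_2^2$ for all $\mathbf x$ with at most $s$ nonzero entries. ''The nonzero rows of $X$ are in general position'' means any $r$ of the $k$ nonzero rows of $X$ are linearly independent. *)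

From HB Require Import structures.
From mathcomp Require Import all_boot all_order all_algebra.
Set Implicit Arguments. Unset Strict Implicit. Unset Printing Implicit Defensive.
Import Order.TTheory GRing.Theory Num.Theory.
Local Open Scope ring_scope.

Definition rsupp (R : ringType) (n r : nat) (X : 'M[R]_(n, r)) : {set 'I_n} :=
  [set i | row i X != 0].

Definition vsupp (R : ringType) (n : nat) (x : 'cV[R]_n) : {set 'I_n} :=
  [set i | x i 0 != 0].

Definition sqnorm (R : ringType) (n : nat) (x : 'cV[R]_n) : R :=
  \sum_(i < n) x i 0 ^+ 2.

Definition lower_rip_ok (R : realFieldType) (m n : nat) (A : 'M[R]_(m, n))
    (s : nat) (delta : R) : Prop :=
  0 <= delta /\
  forall x : 'cV[R]_n, (#|vsupp x| <= s)%N ->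
    (1 - delta) * sqnorm x <= sqnorm (A *m x).

Definition is_lower_ric (R : realFieldType) (m n : nat) (A : 'M[R]_(m, n))
    (s : nat) (delta : R) : Prop :=
  lower_rip_ok A s delta /\ forall d, lower_rip_ok A s d -> delta <= d.

Definition colsub_set (R : Type) (m n : nat) (A : 'M[R]_(m, n))
    (I : {set 'I_n}) : 'M[R]_(m, #|I|) :=
  colsub (fun j : 'I_#|I| => enum_val j) A.

Definition nonzero_rows_general_position (R : fieldType) (n r : nat)
    (X : 'M[R]_(n, r)) : Prop :=
  forall f : 'I_r -> 'I_n, injective f -> (forall j, f j \in rsupp X) ->
    row_free (rowsub f X).

From HB Require Import structures.
From mathcomp Require Import all_boot all_order all_algebra.
From mathcomp Require Import zify.
Set Implicit Arguments. Unset Strict Implicit. Unset Printing Implicit Defensive.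
Import Order.TTheory GRing.Theory Num.Theory.
Local Open Scope ring_scope.

(* Write E_I for the n x |I| matrix whose columns are the unit vectors e_i,
   i in I, so that A_I = A E_I and [A_I B] = A [E_I X].  Let S = supp X.
   1. Every column of [E_I X] is supported in I :|: S, of size
      k + |I \ S| <= 2k - r + l.  A lower RIP constant delta^L_{2k-r+l}(A) < 1
      makes A injective on such vectors, so rank [A_I B] = rank [E_I X].
   2. The column operation X -> X - E_I X_I turns [E_I X] into [E_I X'], where
      X' keeps only the rows of X outside I; the two blocks have disjoint row
      supports, so rank [E_I X] = |I| + rank X'.
   3. The nonzero rows of X' are the |S \ I| = r - q rows of X indexed by
      S \ I; general position of r nonzero rows implies that fewer of them are
      also independent, so rank X' = r - q. *)

Section RowSupports.
Context {R : fieldType}.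

Definition rows_within n p (T : {set 'I_n}) (M : 'M[R]_(n, p)) : Prop :=
  forall i, i \notin T -> row i M = 0.

Definition unit_cols n (T : {set 'I_n}) : 'M[R]_(n, #|T|) := colsub_set 1%:M T.

Definition rowsub_set n p (M : 'M[R]_(n, p)) (T : {set 'I_n}) : 'M_(#|T|, p) :=
  rowsub (fun j : 'I_#|T| => enum_val j) M.

Definition restrict_rows n p (T : {set 'I_n}) (M : 'M[R]_(n, p)) : 'M_(n, p) :=
  \matrix_(i, j) (if i \in T then M i j else 0).

Lemma rows_withinS n p (T T' : {set 'I_n}) (M : 'M[R]_(n, p)) :
  T \subset T' -> rows_within T M -> rows_within T' M.
Proof.
by move=> /subsetP TT' MT i iT'; apply: MT; apply: contra iT'; exact: TT'.
Qed.

Lemma rows_within_row_mx n p1 p2 (T : {set 'I_n}) (M1 : 'M[R]_(n, p1))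
    (M2 : 'M[R]_(n, p2)) :
  rows_within T M1 -> rows_within T M2 -> rows_within T (row_mx M1 M2).
Proof. by move=> M1T M2T i iT; rewrite row_row_mx M1T ?M2T ?row_mx0. Qed.

Lemma rsupp_within n p (M : 'M[R]_(n, p)) : rows_within (rsupp M) M.
Proof. by move=> i; rewrite inE negbK => /eqP. Qed.

Lemma unit_cols_within n (T : {set 'I_n}) : rows_within T (unit_cols T).
Proof.
move=> i iT; apply/rowP => j; rewrite !mxE.
suff /negPf -> : i != enum_val j by [].
by apply: contraNneq iT => ->; exact: enum_valP.
Qed.

Lemma restrict_rows_within n p (T : {set 'I_n}) (M : 'M[R]_(n, p)) :
  rows_within T (restrict_rows T M).
Proof. by move=> i iT; apply/rowP => j; rewrite !mxE (negPf iT). Qed.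

Lemma submx_tr_within n p q (T : {set 'I_n}) (M : 'M[R]_(n, p))
    (W : 'M_(q, n)) :
  rows_within T M -> (W <= M^T)%MS -> forall i j, j \notin T -> W i j = 0.
Proof.
move=> MT /submxP[U ->] i j jT; rewrite mxE big1 // => k _.
by have /rowP/(_ k) := MT j jT; rewrite !mxE => ->; rewrite mulr0.
Qed.

Lemma rowsub1_free p n (h : 'I_p -> 'I_n) :
  injective h -> row_free (rowsub h (1%:M : 'M[R]_n)).
Proof.
move=> h_inj; apply/row_freeP; exists (rowsub h (1%:M : 'M[R]_n))^T.
apply/matrixP => i j; rewrite mul_rowsub_mx mul1mx !mxE.
by rewrite (inj_eq h_inj) eq_sym.
Qed.

Lemma row_free_rowsub p q r (h : 'I_p -> 'I_q) (M : 'M[R]_(q, r)) :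
  injective h -> row_free M -> row_free (rowsub h M).
Proof.
move=> h_inj Mfree; rewrite /row_free rowsubE mxrankMfree //.
exact: rowsub1_free.
Qed.

Lemma colsub_setE m n (A : 'M[R]_(m, n)) (T : {set 'I_n}) :
  colsub_set A T = A *m unit_cols T.
Proof. by rewrite /unit_cols /colsub_set mulmx_colsub mulmx1. Qed.

(* E_T has full column rank, so multiplying by it on the left keeps ranks. *)
Lemma mxrank_unit_cols_mul n p (T : {set 'I_n}) (W : 'M[R]_(#|T|, p)) :
  \rank (unit_cols T *m W) = \rank W.
Proof.
have E_free : row_free (unit_cols T)^T.
  have -> : (unit_cols T)^T = rowsub (fun j : 'I_#|T| => enum_val j) 1%:M.
    by apply/matrixP => i j; rewrite !mxE eq_sym.
  by apply: rowsub1_free; exact: enum_val_inj.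
by rewrite -mxrank_tr trmx_mul mxrankMfree // mxrank_tr.
Qed.

Lemma mxrank_unit_cols n (T : {set 'I_n}) : \rank (unit_cols T) = #|T|.
Proof. by rewrite -[unit_cols T]mulmx1 mxrank_unit_cols_mul mxrank1. Qed.

Lemma restrict_rowsE n p (T : {set 'I_n}) (M : 'M[R]_(n, p)) :
  restrict_rows T M = unit_cols T *m rowsub_set M T.
Proof.
apply/matrixP => i j; rewrite !mxE; case: ifPn => [iT | iT].
  rewrite (bigD1 (enum_rank_in iT i)) //= big1 => [|k k_ne].
    by rewrite !mxE enum_rankK_in // eqxx mul1r addr0.
  rewrite !mxE; suff /negPf -> : i != enum_val k by rewrite mul0r.
  apply: contra k_ne => /eqP ik; apply/eqP/enum_val_inj.
  by rewrite enum_rankK_in // ik.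
rewrite big1 // => k _; rewrite !mxE.
suff /negPf -> : i != enum_val k by rewrite mul0r.
by apply: contraNneq iT => ->; exact: enum_valP.
Qed.

Lemma mxrank_restrict_rows n p (T : {set 'I_n}) (M : 'M[R]_(n, p)) :
  \rank (restrict_rows T M) = \rank (rowsub_set M T).
Proof. by rewrite restrict_rowsE mxrank_unit_cols_mul. Qed.

Lemma restrict_rows_split n p (T : {set 'I_n}) (M : 'M[R]_(n, p)) :
  M = restrict_rows T M + restrict_rows (~: T) M.
Proof.
apply/matrixP => i j; rewrite !mxE inE.
by case: (i \in T); rewrite ?addr0 ?add0r.
Qed.

Lemma restrict_rows_within_eq n p (S T : {set 'I_n}) (M : 'M[R]_(n, p)) :
  rows_within S M -> restrict_rows T M = restrict_rows (S :&: T) M.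
Proof.
move=> MS; apply/matrixP => i j; rewrite !mxE inE.
case: (boolP (i \in S)) => //= iS; case: (i \in T) => //.
by have /rowP/(_ j) := MS i iS; rewrite !mxE.
Qed.

(* Two blocks with disjoint row supports have independent column spaces, so
   their ranks add up. *)
Lemma mxrank_row_mx_disjoint n p1 p2 (T : {set 'I_n}) (M1 : 'M[R]_(n, p1))
    (M2 : 'M[R]_(n, p2)) :
  rows_within T M1 -> rows_within (~: T) M2 ->
  \rank (row_mx M1 M2) = (\rank M1 + \rank M2)%N.
Proof.
move=> M1T M2T; rewrite -mxrank_tr tr_row_mx -addsmxE.
rewrite mxrank_disjoint_sum ?mxrank_tr //; apply/matrixP => i j; rewrite mxE.
have [jT | jT] := boolP (j \in T).
  by apply: (submx_tr_within M2T (capmxSr _ _)); rewrite inE jT.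
exact: (submx_tr_within M1T (capmxSl _ _)).
Qed.

(* rank [E_T M] = |T| + rank of the rows of M outside T: subtracting
   E_T M_T from M is a column operation, after which the blocks have disjoint
   row supports. *)
Lemma mxrank_unit_cols_row_mx n p (T : {set 'I_n}) (M : 'M[R]_(n, p)) :
  \rank (row_mx (unit_cols T) M) = (#|T| + \rank (restrict_rows (~: T) M))%N.
Proof.
pose C : 'M[R]_(#|T| + p) := block_mx 1%:M (rowsub_set M T) 0 1%:M.
have column_op : row_mx (unit_cols T) M =
    row_mx (unit_cols T) (restrict_rows (~: T) M) *m C.
  by rewrite mul_row_block !mulmx1 !mulmx0 addr0 -restrict_rowsE
    -restrict_rows_split.
have C_free : row_free C.
  by rewrite row_free_unit unitmxE det_ublock !det1 mulr1 unitr1.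
rewrite column_op mxrankMfree // -[in RHS]mxrank_unit_cols.
apply: mxrank_row_mx_disjoint; [exact: unit_cols_within|].
exact: restrict_rows_within.
Qed.

Lemma general_position_row_free n r (X : 'M[R]_(n, r)) (T : {set 'I_n}) :
  nonzero_rows_general_position X -> T \subset rsupp X ->
  (#|T| <= r <= #|rsupp X|)%N -> row_free (rowsub_set X T).
Proof.
move=> gpX TS /andP[Tr rS].
have [s [s_uniq s_size s_sub]] : exists s, [/\ uniq s, size s = (r - #|T|)%N
    & {subset s <= rsupp X :\: T}].
  by apply/card_geqP; rewrite cardsD (setIidPr TS) leq_sub2r.
pose t := enum T ++ s.
have t_size : size t == r by rewrite size_cat -cardE s_size subnKC.
have t_uniq : uniq t.
  rewrite cat_uniq enum_uniq s_uniq andbT /=; apply/hasPn => x /s_sub.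
  by rewrite !inE mem_enum => /andP[].
pose f := tnth (Tuple t_size).
have f_inj : injective f by apply/tuple_uniqP.
have f_supp : forall j, f j \in rsupp X.
  move=> j; have : f j \in t by apply: mem_tnth.
  by rewrite mem_cat mem_enum => /orP[/(subsetP TS) | /s_sub/setDP[]].
have T_first : rowsub_set X T = rowsub (widen_ord Tr) (rowsub f X).
  apply/matrixP => i j; rewrite !mxE /f (tnth_nth (enum_val i)) /= nth_cat.
  by rewrite -cardE ltn_ord -enum_val_nth.
rewrite T_first; apply: row_free_rowsub (gpX f f_inj f_supp).
by move=> a b /(congr1 val) ab; apply: val_inj.
Qed.

End RowSupports.

Section LowerRIP.
Context {R : realFieldType}.

Lemma sqnorm_eq0 n (x : 'cV[R]_n) : (sqnorm x == 0) = (x == 0).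
Proof.
apply/eqP/eqP => [x0 | ->]; last first.
  by rewrite /sqnorm big1 // => i _; rewrite mxE expr0n.
apply/matrixP => i j; rewrite (ord1 j) [RHS]mxE.
have /eqP := @psumr_eq0P _ _ xpredT (fun k => x k 0 ^+ 2)
  (fun k _ => sqr_ge0 _) x0 i isT.
by rewrite sqrf_eq0 => /eqP.
Qed.

Lemma rip_kernel_trivial m n (A : 'M[R]_(m, n)) s d (x : 'cV[R]_n) :
  lower_rip_ok A s d -> d < 1 -> (#|vsupp x| <= s)%N -> A *m x = 0 -> x = 0.
Proof.
case=> _ rip d_lt1 xs Ax0; apply/eqP; rewrite -sqnorm_eq0 eq_le.
have /eqP sqnorm0 : sqnorm (0 : 'cV[R]_m) == 0 by rewrite sqnorm_eq0.
have := rip x xs; rewrite Ax0 sqnorm0 pmulr_rle0 ?subr_gt0 // => ->.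
by apply: sumr_ge0 => i _; exact: sqr_ge0.
Qed.

Lemma mxrank_mul_rip m n p (A : 'M[R]_(m, n)) s d (T : {set 'I_n})
    (M : 'M[R]_(n, p)) :
  lower_rip_ok A s d -> d < 1 -> (#|T| <= s)%N -> rows_within T M ->
  \rank (A *m M) = \rank M.
Proof.
move=> ripA d_lt1 Ts MT; rewrite -mxrank_tr trmx_mul -[RHS]mxrank_tr.
apply/mxrank_injP; apply/eqP/row_matrixP => i; rewrite row0.
set w := row i _.
have w_ker : w *m A^T = 0.
  by apply/sub_kermxP; apply: submx_trans (row_sub _ _) (capmxSr _ _).
have w_supp j : j \notin T -> w 0 j = 0.
  apply: (submx_tr_within MT).
  exact: submx_trans (row_sub _ _) (capmxSl _ _).
have /(congr1 trmx) : w^T = 0.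
  apply: (rip_kernel_trivial ripA d_lt1).
    apply: leq_trans Ts; apply/subset_leq_card/subsetP => j.
    by rewrite inE mxE; apply: contraR => /w_supp ->.
  by rewrite -[A]trmxK -trmx_mul w_ker trmx0.
by rewrite trmxK trmx0.
Qed.

End LowerRIP.

Theorem corollary2 (R : rcfType) (m n r k l : nat)
    (A : 'M[R]_(m, n)) (X : 'M[R]_(n, r)) (I : {set 'I_n}) (q : nat) :
  (r <= m)%N -> (m < n)%N -> (r <= k)%N ->
  #|rsupp X| = k ->
  \rank (A *m X) = r ->
  (1 <= l)%N -> (l <= r)%N ->
  (exists delta : R, is_lower_ric A (2 * k - r + l)%N delta /\ 0 <= delta < 1) ->
  nonzero_rows_general_position X ->
  (#|I| <= minn (2 * (k - r) + l) k)%N ->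
  (#|I :\: rsupp X| <= k - r + l)%N ->
  #|I :&: rsupp X| = (k - r + q)%N ->
  \rank (row_mx (colsub_set A I) (A *m X)) = (#|I| + r - q)%N.
Proof.
move=> _ _ r_le_k S_card _ _ _ [d [[ripA _] /andP[_ d_lt1]]] gpX _ IS_out IS_in.
set S := rsupp X in S_card IS_out IS_in gpX *.
have IS_le_I : (#|I :&: S| <= #|I|)%N by apply/subset_leq_card/subsetIl.
have IS_le_S : (#|I :&: S| <= #|S|)%N by apply/subset_leq_card/subsetIr.
have SI_card : #|S :\: I| = (r - q)%N by rewrite cardsD setIC IS_in S_card; lia.
have IuS_card : (#|I :|: S| <= 2 * k - r + l)%N.
  by move: IS_out; rewrite cardsU cardsD; lia.
(* Columns of [E_I X] are supported in I :|: S, where A is injective. *)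
have within_IuS : rows_within (I :|: S) (row_mx (unit_cols I) X).
  apply: rows_within_row_mx.
    exact: rows_withinS (subsetUl I S) (unit_cols_within (T := I)).
  exact: rows_withinS (subsetUr I S) (rsupp_within (M := X)).
rewrite colsub_setE -mul_mx_row (mxrank_mul_rip ripA d_lt1 IuS_card within_IuS).
(* The rows of X outside I are the r - q independent rows indexed by S :\: I. *)
rewrite mxrank_unit_cols_row_mx.
rewrite (restrict_rows_within_eq _ (rsupp_within (M := X))).
rewrite -setDE mxrank_restrict_rows.
have SI_small : (#|S :\: I| <= r <= #|S|)%N by rewrite SI_card S_card; lia.
rewrite (eqP (general_position_row_free gpX (subsetDl S I) SI_small)) SI_card.
lia.
Qed.
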